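(* Let $d\ge1$ and let $\{N_i(t_i),\ t_i\ge0\}$, $i=1,\dots,d$, be independent one-parameter counting processes. Define $\mathcal{N}(\mathbf{t})=N_1(t_1)+N_2(t_2)+\dots+N_d(t_d)$ for $\mathbf{t}=(t_1,\dots,t_d)\in\mathbb{R}^d_+$. Let $\boldsymbol{\Lambda}=(\lambda_1,\dots,\lambda_d)$ with all $\lambda_i>0$. Then $\{\mathcal{N}(\mathbf{t}),\ \mathbf{t}\in\mathbb{R}^d_+\}$ is a $d$-parameter Poisson process with transition parameter $\boldsymbol{\Lambda}$ if and only if, for each $i=1,\dots,d$, $\{N_i(t_i),\ t_i\ge0\}$ is a Poisson process with transition rate $\lambda_i$.
   Context: A one-parameter counting process is a nonnegative-integer-valued process $N$ with $N(0)=0$ and nondecreasing paths. On $\mathbb{R}^d_+$ use the componentwise partial order: $\mathbf{s}\preceq\mathbf{t}$ iff $s_i\le t_i$ for all $i$; $\mathbf{s}\prec\mathbf{t}$ denotes the strict relation; differences are componentwise and $\boldsymbol{\Lambda}\cdot\mathbf{t}=\sum_i\lambda_it_i$. A multiparameter counting process is a nonnegative-integer-valued random field $\{\mathcal{N}(\mathbf{t}),\mathbf{t}\in\mathbb{R}^d_+\}$ with $\mathcal{N}(\mathbf{0})=0$ and $\mathcal{N}(\mathbf{s})\le\mathcal{N}(\mathbf{t})$ whenever $\mathbf{s}\preceq\mathbf{t}$. A multiparameter (d-parameter) Poisson process (MPP) with transition parameter $\boldsymbol{\Lambda}=(\lambda_1,\dots,\lambda_d)$, $\lambda_i>0$, is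 a multiparameter counting process such that (i) for any $\mathbf{0}=\mathbf{t}^{(0)}\prec\mathbf{t}^{(1)}\prec\dots\prec\mathbf{t}^{(m)}$ the increments $\mathcal{N}(\mathbf{t}^{(k)})-\mathcal{N}(\mathbf{t}^{(k-1)})$, $k=1,\dots,m$, are independent; (ii) for $\mathbf{s}\preceq\mathbf{t}$, $\mathcal{N}(\mathbf{t})-\mathcal{N}(\mathbf{s})$ has the same distribution as $\mathcal{N}(\mathbf{t}-\mathbf{s})$; (iii) for each $\mathbf{t}$, $\mathcal{N}(\mathbf{t})$ is Poisson with mean $\boldsymbol{\Lambda}\cdot\mathbf{t}$. *)

From HB Require Import structures.
From mathcomp Require Import all_boot all_order all_algebra.
From mathcomp Require Import all_classical all_reals all_analysis.
Set Implicit Arguments. Unset Strict Implicit. Unset Printing Implicit Defensive.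
Import Order.TTheory GRing.Theory Num.Theory.
Local Open Scope classical_set_scope.
Local Open Scope ring_scope.

Section Defs.
Context {d0 : measure_display} {T : measurableType d0} {R : realType}.
Variable P : probability T R.

Definition nat_rv (X : T -> nat) := forall n : nat, measurable [set w | X w = n].

Definition mutually_indep (m : nat) (X : 'I_m -> T -> nat) :=
  forall B : 'I_m -> set nat,
    P (\bigcap_(k in [set: 'I_m]) (X k @^-1` B k)) =
    (\prod_(k < m) P (X k @^-1` B k))%E.

(* Poisson law with mean mu >= 0 (mu = 0 gives the Dirac mass at 0). *)
Definition poisson_law (mu : R) (n : nat) : R :=
  expR (- mu) * mu ^+ n / (n`!)%:R.

Definition has_poisson_law (X : T -> nat) (mu : R) :=
  forall n : nat, P [set w | X w = n] = (poisson_law mu n)%:E.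

Definition same_law (X Y : T -> nat) :=
  forall B : set nat, P (X @^-1` B) = P (Y @^-1` B).

Definition counting_process (N : R -> T -> nat) :=
  (forall t, 0 <= t -> nat_rv (N t)) /\
  (forall w, N 0 w = 0%N) /\
  (forall s t w, 0 <= s -> s <= t -> (N s w <= N t w)%N).

Definition poisson_process (lam : R) (N : R -> T -> nat) :=
  counting_process N /\
  (* independent increments over 0 = t_0 < t_1 < ... < t_m *)
  (forall (m : nat) (tt : 'I_m.+1 -> R), tt ord0 = 0 ->
     (forall k : 'I_m, tt (widen_ord (leqnSn m) k) < tt (lift ord0 k)) ->
     mutually_indep (fun k : 'I_m => fun w =>
        (N (tt (lift ord0 k)) w - N (tt (widen_ord (leqnSn m) k)) w)%N)) /\
  (forall s t, 0 <= s -> s <= t ->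
     same_law (fun w => (N t w - N s w)%N) (N (t - s))) /\
  (forall t, 0 <= t -> has_poisson_law (N t) (lam * t)).

Definition indep_processes (d : nat) (N : 'I_d -> R -> T -> nat) :=
  forall (k : nat) (tt : 'I_d -> 'I_k -> R)
         (B : 'I_d -> set ({ffun 'I_k -> nat})),
    (forall i j, 0 <= tt i j) ->
    P (\bigcap_(i in [set: 'I_d])
         [set w | [ffun j => N i (tt i j) w] \in B i]) =
    (\prod_(i < d) P [set w | [ffun j => N i (tt i j) w] \in B i])%E.

Definition ple (d : nat) (s t : 'I_d -> R) := forall i, s i <= t i.
Definition plt (d : nat) (s t : 'I_d -> R) := ple s t /\ s <> t.
Definition nonneg_pt (d : nat) (t : 'I_d -> R) := forall i, 0 <= t i.

Definition mcounting_process (d : nat) (N : ('I_d -> R) -> T -> nat) :=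
  (forall t, nonneg_pt t -> nat_rv (N t)) /\
  (forall w, N (fun _ => 0) w = 0%N) /\
  (forall s t w, nonneg_pt s -> ple s t -> (N s w <= N t w)%N).

Definition mpp (d : nat) (Lam : 'I_d -> R) (N : ('I_d -> R) -> T -> nat) :=
  mcounting_process N /\
  (* (i) independent increments along 0 = t^(0) < t^(1) < ... < t^(m) *)
  (forall (m : nat) (tt : 'I_m.+1 -> 'I_d -> R), tt ord0 = (fun _ => 0) ->
     (forall k : 'I_m, plt (tt (widen_ord (leqnSn m) k)) (tt (lift ord0 k))) ->
     mutually_indep (fun k : 'I_m => fun w =>
        (N (tt (lift ord0 k)) w - N (tt (widen_ord (leqnSn m) k)) w)%N)) /\
  (forall s t, nonneg_pt s -> ple s t ->
     same_law (fun w => (N t w - N s w)%N) (N (fun i => t i - s i))) /\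
  (forall t, nonneg_pt t -> has_poisson_law (N t) (\sum_(i < d) Lam i * t i)).

End Defs.

From HB Require Import structures.
From mathcomp Require Import all_boot all_order all_algebra.
From mathcomp Require Import all_classical all_reals all_analysis.
From mathcomp Require Import ring.
Import Order.TTheory GRing.Theory Num.Theory.
Local Open Scope classical_set_scope.
Local Open Scope ring_scope.
Set Implicit Arguments. Unset Strict Implicit. Unset Printing Implicit Defensive.

(* Necessity: since N_j(0) = 0, N_i(t) is the sum process at t e_i, and the
   restriction of a multiparameter Poisson process to the i-th axis is a
   Poisson process of rate lambda_i.
   Sufficiency: along a chain 0 = t^(0) < ... < t^(m), the increments of the
   sum process are the row sums of the array of coordinate increments
   N_i(t^(k)_i) - N_i(t^(k-1)_i).  The entries of this array are independent:
   across i because the processes are, along k because N_i has independent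
   increments (a coordinate of a strict chain may stall, but then the
   increment is constant).  Row sums of an independent array are independent.
   Marginals and stationarity follow because the law of a sum of independent
   nat-valued variables is the convolution of their laws, and convolving
   Poisson laws adds their means. *)

Lemma bigcapD1_ord (T : Type) (n : nat) (j : 'I_n.+1) (F : 'I_n.+1 -> set T) :
  \bigcap_(k in [set: 'I_n.+1]) F k =
  F j `&` \bigcap_(k in [set: 'I_n]) F (lift j k).
Proof.
apply/seteqP; split => w /=.
  by move=> Fw; split; [exact: Fw | move=> k _; exact: Fw].
by case=> Fjw Fw k _; case: (unliftP j k) => [i ->|->]; [exact: Fw|].
Qed.

Section NatRV.
Context {d0 : measure_display} {T : measurableType d0}.

Lemma nat_rv_preimage (X : T -> nat) (B : set nat) :
  nat_rv X -> measurable (X @^-1` B).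
Proof.
move=> mX; have -> : X @^-1` B = \bigcup_(n in B) [set w | X w = n].
  by apply/seteqP; split => w /=; [move=> BX; exists (X w) | case=> n Bn ->].
by apply: bigcup_measurable => n _; exact: mX.
Qed.

Lemma nat_rv_cst (c : nat) : nat_rv (fun _ : T => c).
Proof.
move=> n; have [->|neq_cn] := eqVneq c n.
  by rewrite (_ : [set w | n = n] = setT) //; apply/seteqP; split.
rewrite (_ : [set w | c = n] = set0) //.
by apply/seteqP; split => w //= /eqP; rewrite (negbTE neq_cn).
Qed.

Lemma nat_rv_map2 (g : nat -> nat -> nat) (X Y : T -> nat) :
  nat_rv X -> nat_rv Y -> nat_rv (fun w => g (X w) (Y w)).
Proof.
move=> mX mY a.
have -> : [set w | g (X w) (Y w) = a] =
  \bigcup_(n in [set: nat]) \bigcup_(m in [set m | g n m = a])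
     ([set w | X w = n] `&` [set w | Y w = m]).
  apply/seteqP; split => w /=; first by move=> gXY; exists (X w) => //; exists (Y w).
  by case=> n _ [m /= gnm [-> ->]].
apply: bigcup_measurable => n _; apply: bigcup_measurable => m _.
by apply: measurableI; [exact: mX | exact: mY].
Qed.

Lemma nat_rv_sum (d : nat) (X : 'I_d -> T -> nat) :
  (forall i, nat_rv (X i)) -> nat_rv (fun w => (\sum_(i < d) X i w)%N).
Proof.
elim: d X => [|d IH] X mX.
  by under eq_fun do rewrite big_ord0; exact: nat_rv_cst.
under eq_fun do rewrite big_ord_recl.
by apply: (nat_rv_map2 addn); [exact: mX | apply: IH => i; exact: mX].
Qed.

End NatRV.

Section NatLaw.
Context {d0 : measure_display} {T : measurableType d0} {R : realType}.
Variable P : probability T R.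

Lemma measureI_preimage_nat (Z : T -> nat) (E : set T) (B : set nat) :
  nat_rv Z -> measurable E ->
  P (E `&` Z @^-1` B) =
  (\sum_(0 <= n <oo | n \in B) P (E `&` [set w | Z w = n]))%E.
Proof.
move=> mZ mE.
have -> : E `&` Z @^-1` B = \bigcup_(n in B) (E `&` [set w | Z w = n]).
  apply/seteqP; split => w /=; first by case=> Ew BZw; exists (Z w).
  by case=> n Bn [Ew ->].
apply: measure_bigcup; first by move=> n _; apply: measurableI => //; exact: mZ.
by move=> i j _ _ [w [[_ <-] [_ <-]]].
Qed.

Lemma indep_event_nat_rv (Z : T -> nat) (E : set T) :
  nat_rv Z -> measurable E ->
  (forall n, P (E `&` [set w | Z w = n]) = (P E * P [set w | Z w = n])%E) ->
  forall B, P (E `&` Z @^-1` B) = (P E * P (Z @^-1` B))%E.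
Proof.
move=> mZ mE indepEZ B.
have PE_fin : P E = (fine (P E))%:E by rewrite fineK // fin_num_measure.
rewrite measureI_preimage_nat // -[Z @^-1` B]setTI measureI_preimage_nat //.
transitivity (\sum_(0 <= n <oo | n \in B)
    ((fine (P E))%:E * P (setT `&` [set w | Z w = n])))%E.
  by apply: eq_eseriesr => n _; rewrite indepEZ setTI -PE_fin.
by rewrite nneseriesZl -?PE_fin.
Qed.

Lemma same_law_nat_rv (X Y : T -> nat) : nat_rv X -> nat_rv Y ->
  (forall n, P [set w | X w = n] = P [set w | Y w = n]) -> same_law P X Y.
Proof.
move=> mX mY XY B.
rewrite -[X @^-1` B]setTI -[Y @^-1` B]setTI !measureI_preimage_nat //.
by apply: eq_eseriesr => n _; rewrite !setTI XY.
Qed.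

End NatLaw.

Section Convolution.
Variable R : realType.

Fixpoint convn (d : nat) : ('I_d -> nat -> \bar R) -> nat -> \bar R :=
  match d with
  | 0 => fun _ a => (if a == 0%N then 1 else 0)%E
  | d'.+1 => fun p a => (\sum_(c < a.+1) p ord0 c *
                         convn (fun i => p (lift ord0 i)) (a - c))%E
  end.

Lemma convn_ge0 (d : nat) (p : 'I_d -> nat -> \bar R) (a : nat) :
  (forall i n, 0 <= p i n)%E -> (0 <= convn p a)%E.
Proof.
elim: d p a => [|d IH] p a p_ge0 /=; first by case: (a == 0%N).
by apply: sume_ge0 => c _; apply: mule_ge0 => //; exact: IH.
Qed.

Lemma poisson_law_conv (x y : R) (a : nat) :
  \sum_(c < a.+1) poisson_law x c * poisson_law y (a - c) = poisson_law (x + y) a.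
Proof.
rewrite /poisson_law opprD expRD (addrC x y) exprDn mulr_sumr mulr_suml.
apply: eq_bigr => c _.
have le_ca : (c <= a)%N by rewrite -ltnS.
have fact_neq0 n : (n`!)%:R != 0 :> R by rewrite pnatr_eq0 -lt0n fact_gt0.
have bin_neq0 : ('C(a, c))%:R != 0 :> R by rewrite pnatr_eq0 -lt0n bin_gt0.
rewrite -(bin_fact le_ca) !natrM -mulr_natr.
by field; rewrite !fact_neq0 bin_neq0.
Qed.

Lemma convn_poisson_law (d : nat) (mu : 'I_d -> R) (a : nat) :
  convn (fun i n => (poisson_law (mu i) n)%:E) a =
  (poisson_law (\sum_(i < d) mu i) a)%:E.
Proof.
elim: d mu a => [|d IH] mu a /=.
  rewrite big_ord0 /poisson_law oppr0 expR0 mul1r.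
  by case: a => [|a] /=; [rewrite expr0 fact0 divr1 | rewrite expr0n /= mul0r].
under eq_bigr do rewrite IH -EFinM.
by rewrite sumEFin poisson_law_conv big_ord_recl.
Qed.

End Convolution.

Section IndepWith.
Context {d0 : measure_display} {T : measurableType d0} {R : realType}.
Variable P : probability T R.

Definition indep_with (d : nat) (E : set T) (X : 'I_d -> T -> nat) :=
  forall B : 'I_d -> set nat,
    P (E `&` \bigcap_(k in [set: 'I_d]) (X k @^-1` B k)) =
    (P E * \prod_(k < d) P (X k @^-1` B k))%E.

Lemma indep_withT (d : nat) (X : 'I_d -> T -> nat) :
  indep_with setT X <-> mutually_indep P X.
Proof.
rewrite /indep_with probability_setT.
by split=> indepX B; have := indepX B; rewrite setTI mul1e.
Qed.

Lemma indep_with_recl (d : nat) (X : 'I_d.+1 -> T -> nat) (E : set T) (c : nat) :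
  indep_with E X ->
  P (E `&` [set w | X ord0 w = c]) = (P E * P [set w | X ord0 w = c])%E /\
  indep_with (E `&` [set w | X ord0 w = c]) (fun i => X (lift ord0 i)).
Proof.
move=> indepX.
have split_c (B : 'I_d -> set nat) :
    P (E `&` [set w | X ord0 w = c] `&`
       \bigcap_(k in [set: 'I_d]) (X (lift ord0 k) @^-1` B k)) =
    (P E * P [set w | X ord0 w = c] *
       \prod_(k < d) P (X (lift ord0 k) @^-1` B k))%E.
  have := indepX (fun k => if unlift ord0 k is Some j then B j else [set c]).
  rewrite (bigcapD1_ord ord0) big_ord_recl unlift_none.
  under eq_bigcapr do rewrite liftK.
  under eq_bigr do rewrite liftK.
  by rewrite setIA muleA.
have PEc : P (E `&` [set w | X ord0 w = c]) = (P E * P [set w | X ord0 w = c])%E.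
  have := split_c (fun _ => setT).
  rewrite (_ : \bigcap_(k in _) _ = setT) ?setIT; last by apply/seteqP; split.
  by rewrite big1 ?mule1 // => k _; rewrite preimage_setT probability_setT.
by split => // B; rewrite split_c PEc.
Qed.

Lemma measureI_sum_convn (d : nat) (X : 'I_d -> T -> nat) (E : set T) (a : nat) :
  measurable E -> (forall i, nat_rv (X i)) -> indep_with E X ->
  P (E `&` [set w | (\sum_(i < d) X i w)%N = a]) =
  (P E * convn (fun i n => P [set w | X i w = n]) a)%E.
Proof.
elim: d X E a => [|d IH] X E a mE mX indepX.
  case: a => [|a] /=.
    rewrite mule1 (_ : [set w | _] = setT) ?setIT //.
    by apply/seteqP; split => w //=; rewrite big_ord0.
  rewrite mule0 (_ : [set w | _] = set0) ?setI0 ?measure0 //.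
  by apply/seteqP; split => w //=; rewrite big_ord0.
pose S w := (\sum_(i < d) X (lift ord0 i) w)%N.
have -> : E `&` [set w | (\sum_(i < d.+1) X i w)%N = a] =
    \bigcup_(c < a.+1)
      (E `&` [set w | X ord0 w = c] `&` [set w | S w = (a - c)%N]).
  apply/seteqP; split => w /=.
    case=> Ew; rewrite big_ord_recl => <-.
    by exists (X ord0 w); [rewrite /= ltnS leq_addr | rewrite /= addKn].
  case=> c /= lt_ca [[Ew X0c] Sw]; split => //.
  by rewrite big_ord_recl; move: Sw; rewrite /S => ->; rewrite X0c subnKC // -ltnS.
have mX0 c : measurable (E `&` [set w | X ord0 w = c]).
  by apply: measurableI => //; exact: mX.
rewrite bigcup_mkord measure_bigsetU_ord /=; first last.
- by move=> i j _ _ [w [[[_ Xi] _] [[_ Xj] _]]]; apply: ord_inj; rewrite -Xi -Xj.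
- move=> c; apply: measurableI => //.
  by apply: nat_rv_sum => i; exact: mX.
rewrite ge0_sume_distrr; last by move=> c _; apply: mule_ge0 => //; exact: convn_ge0.
apply: eq_bigr => c _.
have [PEc indep_tail] := indep_with_recl c indepX.
by rewrite (IH _ _ _ (mX0 c)) ?PEc ?muleA // => i; exact: mX.
Qed.

Lemma indep_with_sum (d : nat) (X : 'I_d -> T -> nat) (E : set T) :
  measurable E -> (forall i, nat_rv (X i)) ->
  indep_with E X -> mutually_indep P X ->
  forall B, P (E `&` (fun w => (\sum_(i < d) X i w)%N) @^-1` B) =
            (P E * P ((fun w => (\sum_(i < d) X i w)%N) @^-1` B))%E.
Proof.
move=> mE mX indepEX /indep_withT indepX.
apply: indep_event_nat_rv => //; first exact: nat_rv_sum.
move=> a; rewrite measureI_sum_convn //.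
by rewrite -[X in (_ * P X)%E]setTI measureI_sum_convn // probability_setT mul1e.
Qed.

End IndepWith.

Section RowSums.
Context {d0 : measure_display} {T : measurableType d0} {R : realType}.
Variable P : probability T R.

Definition indep_array_with (m d : nat) (E : set T) (D : 'I_m -> 'I_d -> T -> nat) :=
  forall B : 'I_m -> 'I_d -> set nat,
    P (E `&` \bigcap_(k in [set: 'I_m]) \bigcap_(i in [set: 'I_d]) (D k i @^-1` B k i)) =
    (P E * \prod_(k < m) \prod_(i < d) P (D k i @^-1` B k i))%E.

Section ArrayRecl.
Variables (m d : nat) (E : set T) (D : 'I_m.+1 -> 'I_d -> T -> nat).
Hypothesis indepD : indep_array_with E D.

Lemma indep_array_with_recl (C : 'I_d -> set nat) (B : 'I_m -> 'I_d -> set nat) :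
  P (E `&` (\bigcap_(i in [set: 'I_d]) (D ord0 i @^-1` C i) `&`
      \bigcap_(k in [set: 'I_m]) \bigcap_(i in [set: 'I_d])
        (D (lift ord0 k) i @^-1` B k i))) =
  (P E * ((\prod_(i < d) P (D ord0 i @^-1` C i)) *
      \prod_(k < m) \prod_(i < d) P (D (lift ord0 k) i @^-1` B k i)))%E.
Proof.
have := indepD (fun k => if unlift ord0 k is Some k' then B k' else C).
rewrite (bigcapD1_ord ord0) big_ord_recl unlift_none.
under [X in P (_ `&` (_ `&` X)) = _ -> _]eq_bigcapr do rewrite liftK.
by under [X in _ = (_ * (_ * X))%E -> _]eq_bigr do rewrite liftK.
Qed.

Lemma indep_array_with_behead : indep_array_with E (fun k => D (lift ord0 k)).
Proof.
move=> B; have := indep_array_with_recl (fun _ => setT) B.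
under eq_bigcapr do rewrite preimage_setT.
under eq_bigr do rewrite preimage_setT probability_setT.
by rewrite bigcapT // setTI big1_eq mul1e.
Qed.

Lemma indep_array_with_head : indep_with P E (D ord0).
Proof.
move=> C; have := indep_array_with_recl C (fun _ _ => setT).
rewrite (_ : \bigcap_(k in _) \bigcap_(i in _) _ = setT) ?setIT; last first.
  by apply/seteqP; split.
rewrite [X in (_ * (_ * X))%E]big1 ?mule1 // => k _.
by rewrite big1 // => i _; rewrite preimage_setT probability_setT.
Qed.

End ArrayRecl.

Lemma indep_with_row_sums (m d : nat) (D : 'I_m -> 'I_d -> T -> nat) (E : set T) :
  measurable E -> (forall k i, nat_rv (D k i)) ->
  indep_array_with E D -> indep_array_with setT D ->
  indep_with P E (fun k w => (\sum_(i < d) D k i w)%N).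
Proof.
elim: m D E => [|m IH] D E mE mD indepED indepD B.
  by rewrite bigcapT ?setIT ?big_ord0 ?mule1 // => -[].
set S0 := fun w => (\sum_(i < d) D ord0 i w)%N.
have mS0 : measurable (S0 @^-1` B ord0).
  by apply: nat_rv_preimage; apply: nat_rv_sum => i; exact: mD.
have /indep_withT indepD0 := indep_array_with_head indepD.
have ES0 : P (E `&` S0 @^-1` B ord0) = (P E * P (S0 @^-1` B ord0))%E.
  exact: (indep_with_sum mE (mD ord0) (indep_array_with_head indepED) indepD0 (B ord0)).
rewrite (bigcapD1_ord ord0) big_ord_recl setIA.
rewrite (IH _ _ (measurableI _ _ mE mS0)); first by rewrite ES0 muleA.
- by move=> k i; exact: mD.
- move=> B'.
  set G := \bigcap_(k in _) \bigcap_(i in _) _.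
  have EG := indep_array_with_behead indepED B'; rewrite -/G in EG.
  have mEG : measurable (E `&` G).
    apply: measurableI => //; apply: fin_bigcap_measurable => // k _.
    by apply: fin_bigcap_measurable => // i _; apply: nat_rv_preimage; exact: mD.
  have indepEG : indep_with P (E `&` G) (D ord0).
    move=> C; rewrite EG -setIA (setIC G) indep_array_with_recl //.
    by rewrite -muleA [X in _ = (_ * X)%E]muleC.
  rewrite -setIA (setIC _ G) setIA.
  rewrite (indep_with_sum mEG (mD ord0) indepEG indepD0) EG ES0.
  by rewrite -!muleA [X in (_ * X)%E = _]muleC.
- exact: indep_array_with_behead.
Qed.

End RowSums.

Section Increments.
Context {d0 : measure_display} {T : measurableType d0} {R : realType}.
Variable P : probability T R.
Variable N : R -> T -> nat.

Definition increment (tt : nat -> R) (k : nat) (w : T) :=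
  (N (tt k.+1) w - N (tt k) w)%N.

Definition indep_increments := forall (m : nat) (tt : nat -> R), tt 0%N = 0 ->
  (forall k, (k < m)%N -> tt k < tt k.+1) ->
  mutually_indep P (fun k : 'I_m => increment tt k).

Definition stationary_increments := forall s t, 0 <= s -> s <= t ->
  same_law P (fun w => (N t w - N s w)%N) (N (t - s)).

Lemma poisson_process_indep_increments (lam : R) :
  poisson_process P lam N -> indep_increments.
Proof.
move=> [_ [indepN _]] m tt tt0 tt_lt.
have := indepN m (fun k : 'I_m.+1 => tt k) tt0.
rewrite (_ : (fun k : 'I_m => _) = fun k : 'I_m => increment tt k); last first.
  by apply: funext => k; apply: funext => w; rewrite /increment lift0.
by apply => k; rewrite lift0; apply: tt_lt; exact: (ltn_ord k).
Qed.

(* A vanishing increment is a constant, hence independent of everything: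
   dropping it together with the repeated time shortens the chain. *)
Lemma indep_increments_le : indep_increments ->
  forall (m : nat) (tt : nat -> R), tt 0%N = 0 ->
  (forall k, (k < m)%N -> tt k <= tt k.+1) ->
  mutually_indep P (fun k : 'I_m => increment tt k).
Proof.
move=> indepN m; elim: m => [|m IH] tt tt0 tt_le; first exact: indepN.
have [[j [lt_jm tt_j]]|tt_lt] :=
  pselect (exists j, (j < m.+1)%N /\ tt j = tt j.+1); last first.
  apply: indepN => // k lt_km; rewrite lt_neqAle tt_le // andbT.
  by apply/eqP => tt_k; apply: tt_lt; exists k.
pose tt' n := if (n <= j)%N then tt n else tt n.+1.
have incr' q : increment tt' q = increment tt (bump j q).
  rewrite /increment /tt' /bump; case: (ltngtP q j) => [lt_qj|lt_jq|->].
  - by rewrite add0n.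
  - by rewrite add1n.
  - by rewrite add1n tt_j.
have tt'_le k : (k < m)%N -> tt' k <= tt' k.+1.
  move=> lt_km; rewrite /tt'; case: (ltngtP k j) => [lt_kj|lt_jk|eq_kj].
  - by apply: tt_le; exact: leqW.
  - by apply: tt_le.
  - by rewrite eq_kj tt_j; apply: tt_le; rewrite -eq_kj.
have indep_rest := IH tt' (tt0 : tt' 0%N = 0) tt'_le.
move=> B; pose j' : 'I_m.+1 := Ordinal lt_jm.
have := indep_rest (fun k => B (lift j' k)).
under eq_bigcapr do rewrite incr'.
under eq_bigr do rewrite incr'.
rewrite (bigcapD1_ord j') (bigD1_ord j') //=.
have incr_j : increment tt j = fun=> 0%N.
  by apply: funext => w; rewrite /increment tt_j subnn.
rewrite incr_j; have [B0|nB0] := pselect (B j' 0%N).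
  rewrite (_ : _ @^-1` _ = setT) ?setTI ?probability_setT ?mul1e //.
  by apply/seteqP; split.
rewrite (_ : _ @^-1` _ = set0) ?set0I ?measure0 ?mul0e //.
by apply/seteqP; split.
Qed.

End Increments.

Lemma inord_lift (m : nat) (k : 'I_m) : inord k.+1 = lift ord0 k :> 'I_m.+1.
Proof. by apply: ord_inj; rewrite lift0 inordK // ltnS. Qed.

Lemma inord_widen (m : nat) (k : 'I_m) : inord k = widen_ord (leqnSn m) k :> 'I_m.+1.
Proof. by apply: ord_inj; rewrite inordK //= ltnS ltnW. Qed.

Lemma chain_nonneg (R : realType) (d m : nat) (tt : 'I_m.+1 -> 'I_d -> R) :
  tt ord0 = (fun _ => 0) ->
  (forall k : 'I_m, ple (tt (widen_ord (leqnSn m) k)) (tt (lift ord0 k))) ->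
  forall k i, 0 <= tt k i.
Proof.
move=> tt0 tt_le k i; rewrite -(inord_val k).
elim: (val k) (ltn_ord k) => [|n IHn] lt_nm.
  by rewrite (_ : inord 0 = ord0) ?tt0 //; apply: ord_inj; rewrite inordK.
have lt_nm' : (n < m)%N by [].
rewrite (inord_lift (Ordinal lt_nm')); apply: le_trans (tt_le _ i).
by rewrite -inord_widen; exact: IHn (ltnW lt_nm').
Qed.

Section SumProcesses.
Context {d0 : measure_display} {T : measurableType d0} {R : realType}.
Variable P : probability T R.
Variables (d : nat) (N : 'I_d -> R -> T -> nat).
Hypothesis countN : forall i, counting_process (N i).
Hypothesis indepN : indep_processes P N.

Local Notation Nsum := (fun (t : 'I_d -> R) w => (\sum_(i < d) N i (t i) w)%N).

Lemma indep_processes_map (k : nat) (tt : 'I_d -> 'I_k -> R)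
    (f : 'I_d -> {ffun 'I_k -> nat} -> nat) :
  (forall i j, 0 <= tt i j) ->
  mutually_indep P (fun i w => f i [ffun j => N i (tt i j) w]).
Proof.
move=> tt_ge0 B; have := indepN (fun i => [set v | B i (f i v)]) tt_ge0.
have preimageE i : [set w | [ffun j => N i (tt i j) w] \in [set v | B i (f i v)]] =
    (fun w => f i [ffun j => N i (tt i j) w]) @^-1` B i.
  by apply/seteqP; split => w /=; rewrite in_setE.
by under eq_bigcapr do rewrite preimageE; under eq_bigr do rewrite preimageE.
Qed.

Lemma indep_processes_at (t : 'I_d -> R) : nonneg_pt t ->
  mutually_indep P (fun i => N i (t i)).
Proof.
move=> t_ge0; have := @indep_processes_map 1 (fun i _ => t i) (fun _ v => v ord0).
rewrite (_ : (fun i w => _) = fun i => N i (t i)); first by apply => i _.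
by apply: funext => i; apply: funext => w; rewrite ffunE.
Qed.

Lemma indep_processes_sub (s t : 'I_d -> R) : nonneg_pt s -> nonneg_pt t ->
  mutually_indep P (fun i w => (N i (t i) w - N i (s i) w)%N).
Proof.
move=> s_ge0 t_ge0.
have := @indep_processes_map 2 (fun i j => if j == ord0 then s i else t i)
  (fun _ v => (v ord_max - v ord0)%N).
rewrite (_ : (fun i w => _) = fun i w => (N i (t i) w - N i (s i) w)%N).
  by apply => i j; case: (j == ord0).
by apply: funext => i; apply: funext => w; rewrite !ffunE.
Qed.

Lemma sum_counting_process : mcounting_process Nsum.
Proof.
split; [|split].
- by move=> t t_ge0; apply: nat_rv_sum => i; apply: (countN i).1.
- by move=> w; rewrite big1 // => i _; exact: (countN i).2.1.
- move=> s t w s_ge0 le_st; apply: leq_sum => i _.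
  exact: (countN i).2.2 (s_ge0 i) (le_st i).
Qed.

Lemma sum_poisson_marginals (Lam : 'I_d -> R) :
  (forall i t, 0 <= t -> has_poisson_law P (N i t) (Lam i * t)) ->
  forall t, nonneg_pt t -> has_poisson_law P (Nsum t) (\sum_(i < d) Lam i * t i).
Proof.
move=> poissonN t t_ge0 n; rewrite -[X in P X]setTI measureI_sum_convn //.
- rewrite probability_setT mul1e -convn_poisson_law; congr convn.
  by apply: funext => i; apply: funext => k; exact: poissonN.
- by move=> i; apply: (countN i).1.
- by apply/indep_withT; exact: indep_processes_at.
Qed.

Lemma sum_stationary_increments :
  (forall i, stationary_increments P (N i)) ->
  forall s t, nonneg_pt s -> ple s t ->
  same_law P (fun w => (Nsum t w - Nsum s w)%N) (Nsum (fun i => t i - s i)).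
Proof.
move=> statN s t s_ge0 le_st.
have t_ge0 : nonneg_pt t by move=> i; exact: le_trans (s_ge0 i) (le_st i).
have ts_ge0 : nonneg_pt (fun i => t i - s i) by move=> i; rewrite subr_ge0.
pose D i w := (N i (t i) w - N i (s i) w)%N.
have mD i : nat_rv (D i) by apply: nat_rv_map2; apply: (countN i).1.
rewrite (_ : (fun w => _) = fun w => (\sum_(i < d) D i w)%N); last first.
  apply: funext => w /=; rewrite sumnB // => i _.
  exact: (countN i).2.2 (s_ge0 i) (le_st i).
apply: same_law_nat_rv; [exact: nat_rv_sum | exact: sum_counting_process.1 |].
move=> a; rewrite -[X in P X = _]setTI -[X in _ = P X]setTI.
rewrite (measureI_sum_convn (X := D)) //; last first.
  by apply/indep_withT; exact: indep_processes_sub.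
rewrite (measureI_sum_convn (X := fun i => N i (t i - s i))) //; first last.
- by apply/indep_withT; exact: indep_processes_at.
- by move=> i; apply: (countN i).1.
congr (_ * _)%E; congr convn; apply: funext => i; apply: funext => n.
exact: statN (s_ge0 i) (le_st i) [set n].
Qed.

Lemma indep_increment_array (m : nat) (tt : 'I_m.+1 -> 'I_d -> R) :
  (forall i, indep_increments P (N i)) -> tt ord0 = (fun _ => 0) ->
  (forall k : 'I_m, ple (tt (widen_ord (leqnSn m) k)) (tt (lift ord0 k))) ->
  indep_array_with P setT (fun k i w =>
    (N i (tt (lift ord0 k) i) w - N i (tt (widen_ord (leqnSn m) k) i) w)%N).
Proof.
move=> indep_incrN tt0 tt_le B; rewrite setTI probability_setT mul1e.
have tt_ge0 := chain_nonneg tt0 tt_le.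
pose D k i w :=
  (N i (tt (lift ord0 k) i) w - N i (tt (widen_ord (leqnSn m) k) i) w)%N.
pose paths_in i := [set v : {ffun 'I_m.+1 -> nat} | forall k : 'I_m,
  B k i (v (lift ord0 k) - v (widen_ord (leqnSn m) k))%N].
have pathsE i : [set w | [ffun j => N i (tt j i) w] \in paths_in i] =
    \bigcap_(k in [set: 'I_m]) (D k i @^-1` B k i).
  apply/seteqP; split => w; rewrite /= in_setE /=.
  - by move=> Bw k _; move: (Bw k); rewrite !ffunE.
  - by move=> Bw k; rewrite !ffunE; exact: Bw.
have -> : \bigcap_(k in [set: 'I_m]) \bigcap_(i in [set: 'I_d]) (D k i @^-1` B k i) =
    \bigcap_(i in [set: 'I_d]) [set w | [ffun j => N i (tt j i) w] \in paths_in i].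
  under [X in _ = X]eq_bigcapr do rewrite pathsE.
  by apply/seteqP; split => w /= Bw ? _ ? _; exact: Bw.
rewrite (indepN _ (fun i j => tt_ge0 j i)) exchange_big; apply: eq_bigr => i _.
have := indep_increments_le (indep_incrN i) (m := m) (tt := fun n => tt (inord n) i).
rewrite (_ : (fun k : 'I_m => _) = fun k => D k i); last first.
  by apply: funext => k; apply: funext => w; rewrite /increment inord_lift inord_widen.
rewrite pathsE; apply.
- by rewrite (_ : inord 0 = ord0) ?tt0 //; apply: ord_inj; rewrite inordK.
- move=> k lt_km; rewrite (inord_lift (Ordinal lt_km)).
  by rewrite (inord_widen (Ordinal lt_km)); exact: tt_le.
Qed.

Lemma sum_indep_increments : (forall i, indep_increments P (N i)) ->
  forall (m : nat) (tt : 'I_m.+1 -> 'I_d -> R), tt ord0 = (fun _ => 0) ->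
  (forall k : 'I_m, plt (tt (widen_ord (leqnSn m) k)) (tt (lift ord0 k))) ->
  mutually_indep P (fun (k : 'I_m) w =>
     (Nsum (tt (lift ord0 k)) w - Nsum (tt (widen_ord (leqnSn m) k)) w)%N).
Proof.
move=> indep_incrN m tt tt0 tt_lt.
have tt_le k : ple (tt (widen_ord (leqnSn m) k)) (tt (lift ord0 k)) by case: (tt_lt k).
have tt_ge0 := chain_nonneg tt0 tt_le.
pose D k i w :=
  (N i (tt (lift ord0 k) i) w - N i (tt (widen_ord (leqnSn m) k) i) w)%N.
rewrite (_ : (fun k w => _) = fun k w => (\sum_(i < d) D k i w)%N); last first.
  apply: funext => k; apply: funext => w /=; rewrite sumnB // => i _.
  exact: (countN i).2.2 (tt_ge0 _ i) (tt_le k i).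
have mD k i : nat_rv (D k i) by apply: nat_rv_map2; apply: (countN i).1.
have indepD := indep_increment_array indep_incrN tt0 tt_le.
by apply/indep_withT; exact: indep_with_row_sums.
Qed.

End SumProcesses.

Section Axis.
Context {d0 : measure_display} {T : measurableType d0} {R : realType}.
Variable d : nat.

Definition axis (i : 'I_d) (t : R) : 'I_d -> R := fun j => if j == i then t else 0.

Lemma mpp_axis (P : probability T R) (Lam : 'I_d -> R)
    (M : ('I_d -> R) -> T -> nat) (i : 'I_d) :
  mpp P Lam M -> poisson_process P (Lam i) (fun t => M (axis i t)).
Proof.
move=> [[mM [M0 le_M]] [indepM [statM poissonM]]].
have axis_ge0 t : 0 <= t -> nonneg_pt (axis i t).
  by move=> t_ge0 j; rewrite /axis; case: ifP.
have axis_le s t : s <= t -> ple (axis i s) (axis i t).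
  by move=> le_st j; rewrite /axis; case: ifP.
have axis0 : axis i 0 = fun _ => 0 by apply: funext => j; rewrite /axis; case: ifP.
have axisB s t : (fun j => axis i t j - axis i s j) = axis i (t - s).
  by apply: funext => j; rewrite /axis; case: ifP; rewrite ?subr0.
split; [split; [|split] | split; [|split]].
- by move=> t t_ge0; exact: mM (axis_ge0 t t_ge0).
- by move=> w; rewrite axis0 M0.
- by move=> s t w s_ge0 le_st; exact: le_M (axis_ge0 s s_ge0) (axis_le s t le_st).
- move=> m tt tt0 tt_lt; apply: (indepM m (fun k => axis i (tt k))) => [|k].
    by rewrite tt0 axis0.
  split; first exact: axis_le (ltW (tt_lt k)).
  move/(congr1 (fun u => u i)); rewrite /axis eqxx => eq_tt.
  by move: (tt_lt k); rewrite eq_tt ltxx.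
- move=> s t s_ge0 le_st; rewrite -axisB.
  exact: statM (axis_ge0 s s_ge0) (axis_le s t le_st).
- move=> t t_ge0; have := poissonM _ (axis_ge0 t t_ge0).
  by rewrite (bigD1 i) //= /axis eqxx big1 ?addr0 // => j /negbTE ->; rewrite mulr0.
Qed.

Lemma sum_axis (N : 'I_d -> R -> T -> nat) (i : 'I_d) :
  (forall j w, N j 0 w = 0%N) ->
  (fun t w => (\sum_(j < d) N j (axis i t j) w)%N) = N i.
Proof.
move=> N0; apply: funext => t; apply: funext => w.
by rewrite (bigD1 i) //= /axis eqxx big1 ?addn0 // => j /negbTE ->.
Qed.

End Axis.

Unset Implicit Arguments.

Theorem mainTheorem1 (d0 : measure_display) (T : measurableType d0)
  (R : realType) (P : probability T R) (d : nat) (N : 'I_d -> R -> T -> nat)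
  (Lam : 'I_d -> R) :
  (0 < d)%N ->
  (forall i, counting_process (N i)) ->
  indep_processes P N ->
  (forall i, 0 < Lam i) ->
  (mpp P Lam (fun t w => (\sum_(i < d) N i (t i) w)%N) <->
   (forall i, poisson_process P (Lam i) (N i))).
Proof.
move=> _ countN indepN _; split.
  move=> mppN i; rewrite -(sum_axis i (fun j => (countN j).2.1)).
  exact: mpp_axis mppN.
move=> poissonN; split; first exact: sum_counting_process.
split.
  apply: sum_indep_increments => // i.
  exact: poisson_process_indep_increments (poissonN i).
split; first by apply: sum_stationary_increments => // i; case: (poissonN i) => _ [_ []].
by apply: sum_poisson_marginals => // i; case: (poissonN i) => _ [_ [_]].
Qed.
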